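(* Let $R_1,R_2$ be rings and $M$ an $(R_1,R_2)$-bimodule. The formal triangular matrix ring $\begin{pmatrix} R_1 & M\\ 0 & R_2\end{pmatrix}$ is NJ-symmetric if and only if $R_1$ and $R_2$ are NJ-symmetric.
   Context: Rings are associative with identity. $N(S)$ is the set of nilpotent elements, $J(S)$ the Jacobson radical of a ring $S$. $S$ is NJ-symmetric if for all $a,b,c\in S$, $abc\in N(S)$ implies $bac\in J(S)$. *)

From HB Require Import structures.
From mathcomp Require Import all_boot all_order all_algebra.
Set Implicit Arguments. Unset Strict Implicit. Unset Printing Implicit Defensive.
Import GRing.Theory.
Local Open Scope ring_scope.

(* Rings: associative with identity (the zero ring is allowed): pzRingType. *)

Definition nilpotent_el (S : pzRingType) (x : S) : Prop := exists n : nat, x ^+ n = 0.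

Definition left_ideal (S : pzRingType) (I : S -> Prop) : Prop :=
  [/\ I 0, (forall x y, I x -> I y -> I (x + y)) & (forall r x, I x -> I (r * x))].

Definition maximal_left_ideal (S : pzRingType) (I : S -> Prop) : Prop :=
  [/\ left_ideal I, ~ (forall x, I x) &
      (forall K : S -> Prop, left_ideal K -> (forall x, I x -> K x) ->
         ~ (forall x, K x) -> forall x, K x -> I x)].

Definition jacobson (S : pzRingType) (x : S) : Prop :=
  forall I : S -> Prop, maximal_left_ideal I -> I x.

Definition NJ_symmetric (S : pzRingType) : Prop :=
  forall a b c : S, nilpotent_el (a * b * c) -> jacobson (b * a * c).

Record bimodule (R1 R2 : pzRingType) (M : zmodType) := Bimodule {
  lact : R1 -> M -> M;
  ract : M -> R2 -> M;
  lactDl : forall (a b : R1) (m : M), lact (a + b) m = lact a m + lact b m;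
  lactDr : forall (a : R1) (m n : M), lact a (m + n) = lact a m + lact a n;
  lactA : forall (a b : R1) (m : M), lact (a * b) m = lact a (lact b m);
  lact1 : forall m : M, lact 1 m = m;
  ractDl : forall (m n : M) (r : R2), ract (m + n) r = ract m r + ract n r;
  ractDr : forall (m : M) (r s : R2), ract m (r + s) = ract m r + ract m s;
  ractA : forall (m : M) (r s : R2), ract m (r * s) = ract (ract m r) s;
  ract1 : forall m : M, ract m 1 = m;
  bimodA : forall (a : R1) (m : M) (r : R2), ract (lact a m) r = lact a (ract m r)
}.

(* The formal triangular matrix ring [[R1, M], [0, R2]] (indexed by the
   bimodule structure B); the element ((a, m), b) stands for the matrix
   [[a, m], [0, b]]. *)
Definition tri_ring (R1 R2 : pzRingType) (M : zmodType) (B : bimodule R1 R2 M) : Type :=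
  (R1 * M * R2)%type.

Section Triangular.
Variables (R1 R2 : pzRingType) (M : zmodType) (B : bimodule R1 R2 M).
Local Notation tri_ring := (tri_ring B).

HB.instance Definition _ := GRing.Zmodule.on tri_ring.

Definition tri_one : tri_ring := ((1, 0), 1).
Definition tri_mul (x y : tri_ring) : tri_ring :=
  ((x.1.1 * y.1.1, lact B x.1.1 y.1.2 + ract B x.1.2 y.2), x.2 * y.2).

Lemma lact0r (a : R1) : lact B a 0 = 0.
Proof. by apply: (@addrI _ (lact B a 0)); rewrite -lactDr !addr0. Qed.
Lemma lact0l (m : M) : lact B 0 m = 0.
Proof. by apply: (@addrI _ (lact B 0 m)); rewrite -lactDl !addr0. Qed.
Lemma ract0r (m : M) : ract B m 0 = 0.
Proof. by apply: (@addrI _ (ract B m 0)); rewrite -ractDr !addr0. Qed.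
Lemma ract0l (r : R2) : ract B 0 r = 0.
Proof. by apply: (@addrI _ (ract B 0 r)); rewrite -ractDl !addr0. Qed.

Lemma tri_mulA : associative tri_mul.
Proof.
move=> [[a m] b] [[a' m'] b'] [[a'' m''] b'']; rewrite /tri_mul /=.
congr ((_, _), _); rewrite ?mulrA //.
rewrite lactDr ractDl lactA bimodA ractA addrA; congr (_ + _).
Qed.
Lemma tri_mul1 : left_id tri_one tri_mul.
Proof. by move=> [[a m] b]; rewrite /tri_mul /= !mul1r lact1 ract0l addr0. Qed.
Lemma tri_mulr1 : right_id tri_one tri_mul.
Proof. by move=> [[a m] b]; rewrite /tri_mul /= !mulr1 ract1 lact0r add0r. Qed.
Lemma tri_mulDl : left_distributive tri_mul +%R.
Proof.
move=> [[a m] b] [[a' m'] b'] [[a'' m''] b'']; rewrite /tri_mul /=.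
congr ((_, _), _); rewrite ?mulrDl // lactDl ractDl.
by rewrite addrACA.
Qed.
Lemma tri_mulDr : right_distributive tri_mul +%R.
Proof.
move=> [[a m] b] [[a' m'] b'] [[a'' m''] b'']; rewrite /tri_mul /=.
congr ((_, _), _); rewrite ?mulrDr // lactDr ractDr.
by rewrite addrACA.
Qed.

HB.instance Definition _ :=
  GRing.Zmodule_isPzRing.Build tri_ring tri_mulA tri_mul1 tri_mulr1 tri_mulDl tri_mulDr.

End Triangular.

(* The diagonal projections of T = [[R1, M], [0, R2]] onto R1 and R2 are
   surjective ring morphisms.  Nilpotency is read off the diagonal, because a
   matrix with zero diagonal squares to zero.  For the Jacobson radical, the
   off-diagonal matrices are quasi-regular, hence lie in every maximal left
   ideal K of T; then K contains either e22, and with it the kernel of the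
   first projection, or (by comaximality with e22) e11 and the kernel of the
   second.  A maximal left ideal containing the kernel of a surjective
   morphism is the preimage of a maximal left ideal, so
   J(T) = [[J(R1), M], [0, J(R2)]], and NJ-symmetry transfers entrywise. *)

From HB Require Import structures.
From mathcomp Require Import all_boot all_order all_algebra.
From Stdlib Require Import Classical.

Set Implicit Arguments.
Unset Strict Implicit.
Unset Printing Implicit Defensive.
Import GRing.Theory.
Local Open Scope ring_scope.

Section LeftIdeals.
Variable S : pzRingType.
Implicit Types (K : S -> Prop) (x z : S).

Lemma left_ideal_full K : left_ideal K -> K 1 -> forall x, K x.
Proof. by case=> _ _ KM K1 x; rewrite -(mulr1 x); apply: KM. Qed.

Lemma maximal_left_ideal_comax K z :
  maximal_left_ideal K -> ~ K z -> exists r, K (1 - r * z).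
Proof.
case=> [[K0 KD KM] _ Kmax] Kz.
pose L w := exists r, K (w - r * z).
have Lid : left_ideal L.
  split.
  - by exists 0; rewrite mul0r subr0.
  - move=> x y [r Kr] [s Ks]; exists (r + s).
    by rewrite mulrDl opprD addrACA; apply: KD.
  - by move=> r x [s Ks]; exists (r * s); rewrite -mulrA -mulrBr; apply: KM.
have KL x : K x -> L x by exists 0; rewrite mul0r subr0.
have [Lfull|Lproper] := classic (forall x, L x); first exact: Lfull 1.
by case: Kz; apply: Kmax Lid KL Lproper _ _; exists 1; rewrite mul1r subrr.
Qed.

Lemma jacobson_quasi_regular z :
  (forall r, exists u, u * (1 - r * z) = 1) -> jacobson z.
Proof.
move=> qreg K Kmax; apply: NNPP => Kz.
have [r Kr] := maximal_left_ideal_comax Kmax Kz.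
have [Kid Kproper _] := Kmax; have [u Eu] := qreg r.
apply: Kproper; apply: left_ideal_full => //.
by case: Kid => _ _ KM; rewrite -Eu; apply: KM.
Qed.

End LeftIdeals.

Lemma nilpotent0 (S : pzRingType) : nilpotent_el (0 : S).
Proof. by exists 1; rewrite expr1. Qed.

Lemma nilpotent_rmorph (S R : pzRingType) (f : {rmorphism S -> R}) x :
  nilpotent_el x -> nilpotent_el (f x).
Proof. by case=> n xn; exists n; rewrite -rmorphXn xn rmorph0. Qed.

Section SurjectiveRMorphism.
Variables (S R : pzRingType) (f : {rmorphism S -> R}).
Hypothesis f_surj : forall y, exists x, f x = y.

Lemma left_ideal_preim (I : R -> Prop) :
  left_ideal I -> left_ideal (fun x => I (f x)).
Proof.
case=> I0 ID IM; split=> [|x y|r x]; rewrite ?rmorph0 ?rmorphD ?rmorphM //.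
  exact: ID.
exact: IM.
Qed.

Lemma left_ideal_image (K : S -> Prop) :
  left_ideal K -> left_ideal (fun y => exists2 x, K x & f x = y).
Proof.
case=> K0 KD KM; split.
- by exists 0; rewrite ?rmorph0.
- by move=> _ _ [x Kx <-] [y Ky <-]; exists (x + y); rewrite ?rmorphD //; apply: KD.
- move=> r _ [x Kx <-]; have [s <-] := f_surj r.
  by exists (s * x); rewrite ?rmorphM //; apply: KM.
Qed.

Lemma left_ideal_full_rmorph (K : S -> Prop) x :
  left_ideal K -> (forall y, f y = 0 -> K y) -> K x -> f x = 1 -> forall y, K y.
Proof.
move=> Kid Kker Kx fx1; apply: left_ideal_full => //.
rewrite -(subrK x 1); case: (Kid) => _ KD _; apply: KD Kx.
by apply: Kker; rewrite rmorphB rmorph1 fx1 subrr.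
Qed.

Lemma maximal_left_ideal_preim (I : R -> Prop) :
  maximal_left_ideal I -> maximal_left_ideal (fun x => I (f x)).
Proof.
case=> Iid Iproper Imax; split; first exact: left_ideal_preim.
  by move=> Ifull; apply: Iproper => y; have [x <-] := f_surj y.
move=> L Lid IL Lproper x Lx.
have fLid := left_ideal_image Lid.
apply: (Imax _ fLid) => [y Iy||]; last by exists x.
  by have [z fz] := f_surj y; exists z; rewrite ?fz //; apply: IL; rewrite fz.
move=> /(_ 1) [l Ll fl1]; apply: Lproper.
apply: left_ideal_full_rmorph Ll fl1 => // y fy0; apply: IL.
by case: Iid; rewrite fy0.
Qed.

Lemma maximal_left_ideal_image (K : S -> Prop) :
  maximal_left_ideal K -> (forall x, f x = 0 -> K x) ->
  maximal_left_ideal (fun y => exists2 x, K x & f x = y).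
Proof.
move=> [Kid Kproper Kmax] Kker; split; first exact: left_ideal_image.
  by move=> /(_ 1) [k Kk fk1]; apply: Kproper; apply: left_ideal_full_rmorph Kk fk1.
move=> L Lid KL Lproper y Ly; have [x fx] := f_surj y; exists x => //.
apply: (Kmax _ (left_ideal_preim Lid)) => [z Kz|Lfull|]; last by rewrite fx.
  by apply: KL; exists z.
by apply: Lproper => z; have [t <-] := f_surj z.
Qed.

Lemma jacobson_rmorph x : jacobson x -> jacobson (f x).
Proof. by move=> Jx I /maximal_left_ideal_preim /Jx. Qed.

Lemma maximal_left_ideal_rmorph_jacobson (K : S -> Prop) x :
  maximal_left_ideal K -> (forall y, f y = 0 -> K y) -> jacobson (f x) -> K x.
Proof.
move=> Kmax Kker /(_ _ (maximal_left_ideal_image Kmax Kker)) [k Kk fk].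
have [[_ KD _] _ _] := Kmax; rewrite -(subrK k x); apply: KD Kk.
by apply: Kker; rewrite rmorphB fk subrr.
Qed.

End SurjectiveRMorphism.

Section TriangularRing.
Variables (R1 R2 : pzRingType) (M : zmodType) (B : bimodule R1 R2 M).
Local Notation T := (tri_ring B).
Implicit Types (X Y : T) (m : M).

Lemma tri_mulE X Y :
  X * Y = ((X.1.1 * Y.1.1, lact B X.1.1 Y.1.2 + ract B X.1.2 Y.2), X.2 * Y.2).
Proof. by []. Qed.

Lemma tri_addE X Y : X + Y = ((X.1.1 + Y.1.1, X.1.2 + Y.1.2), X.2 + Y.2).
Proof. by []. Qed.

Definition tri_proj1 X : R1 := X.1.1.
Definition tri_proj2 X : R2 := X.2.

HB.instance Definition _ := GRing.isZmodMorphism.Build T R1 tri_proj1 (fun _ _ => erefl).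
HB.instance Definition _ := GRing.isMonoidMorphism.Build T R1 tri_proj1 (erefl, fun _ _ => erefl).
HB.instance Definition _ := GRing.isZmodMorphism.Build T R2 tri_proj2 (fun _ _ => erefl).
HB.instance Definition _ := GRing.isMonoidMorphism.Build T R2 tri_proj2 (erefl, fun _ _ => erefl).

Lemma tri_proj1_surj a : exists X, tri_proj1 X = a.
Proof. by exists ((a, 0), 0). Qed.

Lemma tri_proj2_surj b : exists X, tri_proj2 X = b.
Proof. by exists ((0, 0), b). Qed.

Lemma tri_diag_mul (a a' : R1) (b b' : R2) :
  (((a, 0), b) : T) * ((a', 0), b') = ((a * a', 0), b * b').
Proof. by rewrite tri_mulE /= lact0r ract0l addr0. Qed.

Lemma tri_sqr_offdiag X : X.1.1 = 0 -> X.2 = 0 -> X * X = 0.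
Proof. by case: X => [[a m] b] /= -> ->; rewrite tri_mulE /= lact0l ract0r !mul0r addr0. Qed.

Lemma tri_nilpotentP X : nilpotent_el X <-> nilpotent_el X.1.1 /\ nilpotent_el X.2.
Proof.
split=> [Xnil|[[n1 X1n] [n2 X2n]]].
  by split; [exact: (nilpotent_rmorph tri_proj1) | exact: (nilpotent_rmorph tri_proj2)].
exists (n1 + n2).*2; rewrite -addnn exprD; apply: tri_sqr_offdiag.
  by rewrite -[_.1.1]/(tri_proj1 _) rmorphXn exprD X1n mul0r.
by rewrite -[_.2]/(tri_proj2 _) rmorphXn exprD X2n mulr0.
Qed.

Lemma tri_offdiag_jacobson m : jacobson (((0, m), 0) : T).
Proof.
apply: jacobson_quasi_regular => r; exists ((1, lact B r.1.1 m), 1).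
by rewrite !tri_mulE /= !mulr0 !subr0 !mul1r lact1 ract1 ract0r addr0 sub0r addNr.
Qed.

Lemma tri_maximal_left_ideal_ker (K : T -> Prop) : maximal_left_ideal K ->
  (forall Y : T, Y.1.1 = 0 -> K Y) \/ (forall Y : T, Y.2 = 0 -> K Y).
Proof.
move=> Kmax; have [[_ KD KM] _ _] := Kmax.
have Koff m : K ((0, m), 0) by apply: tri_offdiag_jacobson.
have [Ke2|Ke2] := classic (K ((0, 0), 1)); [left|right].
  case=> [[a m] b] /= ->.
  have -> : ((0, m), b) = ((0, m), 0) + (((0, 0), b) : T) * ((0, 0), 1).
    by rewrite tri_addE tri_mulE /= lact0r ract0l mulr1 mul0r !addr0 !add0r.
  exact: KD (Koff _) (KM _ _ Ke2).
have Ke1 : K ((1, 0), 0).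
  have [r Kr] := maximal_left_ideal_comax Kmax Ke2.
  have Er : (((1, 0), 0) : T) * (r * ((0, 0), 1)) = ((0, r.1.2), 0).
    by rewrite !tri_mulE /= !mulr0 !mul0r lact1 lact0r ract0l ract1 !add0r addr0.
  have -> : ((1, 0), 0) = (((1, 0), 0) : T) * (1 - r * ((0, 0), 1)) + ((0, r.1.2), 0).
    by rewrite mulrBr mulr1 Er subrK.
  exact: KD (KM _ _ Kr) (Koff _).
case=> [[a m] b] /= ->.
have -> : ((a, m), 0) = (((a, 0), 0) : T) * ((1, 0), 0) + ((0, m), 0).
  by rewrite tri_addE tri_mulE /= lact0r ract0l mulr1 mul0r !addr0 add0r.
exact: KD (KM _ _ Ke1) (Koff _).
Qed.

Lemma tri_jacobsonP X : jacobson X <-> jacobson X.1.1 /\ jacobson X.2.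
Proof.
split=> [JX|[J1 J2] K Kmax].
  split; [exact: (jacobson_rmorph tri_proj1_surj) | exact: (jacobson_rmorph tri_proj2_surj)].
case: (tri_maximal_left_ideal_ker Kmax) => Kker.
  exact: (maximal_left_ideal_rmorph_jacobson tri_proj1_surj Kmax Kker J1).
exact: (maximal_left_ideal_rmorph_jacobson tri_proj2_surj Kmax Kker J2).
Qed.

End TriangularRing.

Theorem corollary2p22 (R1 R2 : pzRingType) (M : zmodType) (B : bimodule R1 R2 M) :
  NJ_symmetric (tri_ring B) <-> NJ_symmetric R1 /\ NJ_symmetric R2.
Proof.
split=> [NJ|[NJ1 NJ2] X Y Z /tri_nilpotentP[N1 N2]].
  split=> a b c abcN.
    have /NJ : nilpotent_el ((((a, 0), 0) : tri_ring B) * ((b, 0), 0) * ((c, 0), 0)).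
      by apply/tri_nilpotentP; rewrite !tri_diag_mul !mul0r; split; last exact: nilpotent0.
    by rewrite !tri_diag_mul => /tri_jacobsonP[].
  have /NJ : nilpotent_el ((((0, 0), a) : tri_ring B) * ((0, 0), b) * ((0, 0), c)).
    by apply/tri_nilpotentP; rewrite !tri_diag_mul !mul0r; split; first exact: nilpotent0.
  by rewrite !tri_diag_mul => /tri_jacobsonP[].
apply/tri_jacobsonP; split.
  exact: (NJ1 X.1.1 Y.1.1 Z.1.1).
exact: (NJ2 X.2 Y.2 Z.2).
Qed.
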